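(* Let $N\ge2$ and let $\phi:\mathbb{R}_{\ge0}\to\mathbb{R}$ be continuous. Then the DKPP $P_\phi(\cdot;\bm{L})$ is log-modular for every $N\times N$ positive semidefinite Hermitian matrix $\bm{L}$ if and only if $\phi$ is affine, i.e. $\phi(x)=bx+c$ for some $b,c\in\mathbb{R}$. (In particular, if $\phi$ is affine then $P_\phi(\cdot;\bm{L})$ is log-modular for every such $\bm{L}$.)
   Context: Let $\mathcal{Y}=\{1,\dots,N\}$. For $\mathcal{A}\subseteq\mathcal{Y}$, $\bm{L}[\mathcal{A}]=(L_{ij})_{i,j\in\mathcal{A}}$ denotes the principal submatrix. For a function $\phi$ and a Hermitian matrix $\bm{X}=\bm{U}\mathrm{diag}(\mu_1,\dots,\mu_k)\bm{U}^*$, $\phi(\bm{X})=\bm{U}\mathrm{diag}(\phi(\mu_1),\dots,\phi(\mu_k))\bm{U}^*$. Given a continuous $\phi:\mathbb{R}_{\ge0}\to\mathbb{R}$ and an $N\times N$ positive semidefinite Hermitian $\bm{L}$, the DKPP is $P_\phi(\mathcal{A};\bm{L})=\exp(\operatorname{tr}\phi(\bm{L}[\mathcal{A}]))/Z_\phi(\bm{L})$ with $Z_\phi(\bm{L})=\sum_{\mathcal{B}\subseteq\mathcal{Y}}\exp(\operatorname{tr}\phi(\bm{L}[\mathcal{B}]))$ and $\operatorname{tr}\phi$ of the empty matrix equal to $0$. A set function $f:2^{\mathcal{Y}}\to\mathbb{R}$ is modular if $f(\mathcal{S})+f(\mathcal{T})=f(\mathcal{S}\cup\mathcal{T})+f(\mathcal{S}\cap\mathcal{T})$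 for all $\mathcal{S},\mathcal{T}\subseteq\mathcal{Y}$; a positive function $P$ is log-modular if $\log P$ is modular. *)

From HB Require Import structures.
From mathcomp Require Import all_boot all_order all_algebra.
From mathcomp Require Import complex spectral.
From mathcomp Require Import all_classical all_reals all_analysis.

Set Implicit Arguments.
Unset Strict Implicit.
Unset Printing Implicit Defensive.

Import Order.TTheory GRing.Theory Num.Theory.
Local Open Scope ring_scope.
Local Open Scope complex_scope.
Local Open Scope sesquilinear_scope.

Section DKPP.
Variable R : realType.
Local Notation C := R[i].

(* Hermitian matrices: the library's  L \is hermsymmx  (L == L^T conjugated). *)

(* Positive semidefinite: v L v^* is a nonnegative real for every (row) vector v. *)
Definition psdmx k (L : 'M[C]_k) : Prop :=
  forall v : 'rV[C]_k, 0 <= (v *m L *m v ^t*) 0 0.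

Definition spectral_decomp k (X U : 'M[C]_k) (mu : 'rV[R]_k) : Prop :=
  U \is unitarymx /\ X = U *m diag_mx (map_mx (fun x => x%:C) mu) *m U ^t*.

(* phi(X) = U diag(phi(mu_1),...,phi(mu_k)) U^* for a chosen spectral decomposition
   (well defined for Hermitian X; 0 if X has no such decomposition). *)
Definition matfun k (phi : R -> R) (X : 'M[C]_k) : 'M[C]_k :=
  match pselect (exists p : 'M[C]_k * 'rV[R]_k, spectral_decomp X p.1 p.2) with
  | left e => let p := projT1 (cid e) in
              p.1 *m diag_mx (map_mx (fun x => (phi x)%:C) p.2) *m p.1 ^t*
  | right _ => 0
  end.

(* tr phi(X); it is real for Hermitian X, we take the real part to land in R.
   For the empty (0 x 0) matrix this is 0. *)
Definition trphi k (phi : R -> R) (X : 'M[C]_k) : R := complex.Re (\tr (matfun phi X)).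

Definition principal_submx N (L : 'M[C]_N) (A : {set 'I_N}) : 'M[C]_#|A| :=
  \matrix_(i, j) L (enum_val i) (enum_val j).

Definition dkpp_Z N (phi : R -> R) (L : 'M[C]_N) : R :=
  \sum_(B : {set 'I_N}) expR (trphi phi (principal_submx L B)).

Definition dkpp N (phi : R -> R) (L : 'M[C]_N) (A : {set 'I_N}) : R :=
  expR (trphi phi (principal_submx L A)) / dkpp_Z phi L.

End DKPP.

Definition modular (T : finType) (R : realType) (f : {set T} -> R) : Prop :=
  forall S T' : {set T}, f S + f T' = f (S :|: T') + f (S :&: T').

Definition log_modular (T : finType) (R : realType) (P : {set T} -> R) : Prop :=
  (forall A, 0 < P A) /\ modular (fun A => ln (P A)).
Arguments psdmx {R k} L.
Arguments matfun {R k} phi X.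
Arguments trphi {R k} phi X.
Arguments principal_submx {R N} L A.
Arguments dkpp_Z {R N} phi L.
Arguments dkpp {R N} phi L A.

(* If phi x = b x + c on [0, +oo), then for PSD Hermitian L the
   eigenvalues of L[A] are nonnegative and tr phi(L[A]) = b tr L[A] + c |A| is a
   sum of weights of the elements of A, hence modular; log P_phi differs from it
   by the constant log Z.
   Conversely, for 0 <= s <= t and two indices i0 != i1, the PSD matrix
   (t - s) I + s v v^*, v the indicator of {i0, i1}, has entry t at {i0} and
   {i1} and the block [[t, s], [s, t]] with eigenvalues t + s, t - s at
   {i0, i1}; modularity at S = {i0}, T = {i1} gives the Jensen equation
   phi (t + s) + phi (t - s) = 2 phi t.  Subtracting the affine interpolant
   of phi at 0 and 1 yields a solution vanishing at the integers (induction),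
   hence at the dyadic rationals (halving), hence on [0, +oo) by continuity. *)

From HB Require Import structures.
From mathcomp Require Import all_boot all_order all_algebra.
From mathcomp Require Import complex spectral.
From mathcomp Require Import all_classical all_reals all_analysis.
From mathcomp Require Import ring lra.
Set Implicit Arguments.
Unset Strict Implicit.
Unset Printing Implicit Defensive.
Import Order.TTheory GRing.Theory Num.Theory.
Import numFieldNormedType.Exports.
Local Open Scope classical_set_scope.
Local Open Scope ring_scope.

Section MidpointAffine.
Variable R : realType.
Implicit Types (f : R -> R) (x : R).

Local Notation nonneg := [set x : R | 0 <= x].

Lemma continuous_within_nonneg_ball f : {within nonneg, continuous f} ->
  forall x, 0 <= x -> forall e, 0 < e ->
  exists2 d, 0 < d & forall y, 0 <= y -> `|x - y| < d -> `|f x - f y| < e.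
Proof.
move=> fC x x0 e e0.
have /cvgrPdist_lt/(_ e e0) := proj1 (subspace_continuousP _ _) fC x x0.
rewrite near_withinE /= => /nbhs_ballP [d d0 fB].
by exists d => // y y0 xy; apply: fB.
Qed.

Lemma continuous_within_subr_affine f (b c : R) : {within nonneg, continuous f} ->
  {within nonneg, continuous (fun x => f x - (b * x + c))}.
Proof.
move=> /subspace_continuousP fC; apply/subspace_continuousP => x x0.
apply: cvgB; first exact: fC.
apply: cvg_within_filter.
by apply: cvgD; [apply: cvgMr; exact: cvg_id | exact: cvg_cst].
Qed.

Lemma dyadic_approx x d : 0 <= x -> 0 < d ->
  exists m n : nat, n%:R / 2 ^+ m <= x /\ x - n%:R / 2 ^+ m < d.
Proof.
move=> x0 d0.
pose m := (Num.trunc d^-1).+1.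
have m_gt : d^-1 < m%:R := truncnS_gt _.
have pow2_gt0 : 0 < 2 ^+ m :> R by rewrite exprn_gt0.
have pow2_gt : d^-1 < 2 ^+ m.
  by apply: (lt_trans m_gt); rewrite -natrX ltr_nat ltn_expl.
have /andP [n_le n_gt] := truncn_itv (mulr_ge0 x0 (ltW pow2_gt0)).
exists m, (Num.trunc (x * 2 ^+ m)); split; first by rewrite ler_pdivrMr.
apply: (@lt_trans _ _ (1 / 2 ^+ m)).
  by rewrite ltrBlDl -mulrDl ltr_pdivlMr // natr1.
by rewrite div1r -[d]invrK ltf_pV2 ?posrE ?invr_gt0.
Qed.

Section MidpointEquation.
Variable g : R -> R.
Hypothesis g_midpoint : forall t s, 0 <= s -> s <= t -> g (t + s) + g (t - s) = 2 * g t.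
Hypotheses (g0 : g 0 = 0) (g1 : g 1 = 0).

Lemma midpoint_zero_nat n : g n%:R = 0.
Proof.
suff : g n%:R = 0 /\ g n.+1%:R = 0 by case.
elim: n => [|n [gn gSn]]; first by rewrite g0 g1.
split=> //; have := @g_midpoint n.+1%:R 1 ler01.
by rewrite -natr1 addrK !natr1 gn gSn mulr0 addr0; apply; rewrite ler1n.
Qed.

Lemma midpoint_half x : 0 <= x -> g (x / 2) = g x / 2.
Proof.
move=> x0; have x2_ge0 : 0 <= x / 2 by rewrite divr_ge0.
have := g_midpoint x2_ge0 (lexx (x / 2)).
by rewrite subrr g0 addr0 -splitr => ->; field.
Qed.

Lemma midpoint_zero_dyadic m n : g (n%:R / 2 ^+ m) = 0.
Proof.
elim: m n => [|m IHm] n; first by rewrite expr0 divr1 midpoint_zero_nat.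
have -> : n%:R / 2 ^+ m.+1 = n%:R / 2 ^+ m / 2 :> R.
  by rewrite exprSr invfM mulrA.
by rewrite midpoint_half ?IHm ?mul0r // divr_ge0 // exprn_ge0.
Qed.

Hypothesis gC : {within nonneg, continuous g}.

Lemma midpoint_zero x : 0 <= x -> g x = 0.
Proof.
move=> x0; apply/eqP/negPn/negP => gx_neq0.
have gx_gt0 : 0 < `|g x| by rewrite normr_gt0.
have [d d0 gB] := continuous_within_nonneg_ball gC x0 gx_gt0.
have [m [n [y_le y_near]]] := dyadic_approx x0 d0.
have := gB _ (divr_ge0 (ler0n _ n) (exprn_ge0 m (ler0n _ 2))).
rewrite midpoint_zero_dyadic subr0 ltxx ger0_norm ?subr_ge0 //.
by move/(_ y_near).
Qed.

End MidpointEquation.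

Lemma midpoint_affine f : {within nonneg, continuous f} ->
  (forall t s, 0 <= s -> s <= t -> f (t + s) + f (t - s) = 2 * f t) ->
  exists b c : R, forall x, 0 <= x -> f x = b * x + c.
Proof.
move=> fC f_midpoint; exists (f 1 - f 0), (f 0) => x x0.
pose g y := f y - ((f 1 - f 0) * y + f 0).
suff : g x = 0 by move/eqP; rewrite subr_eq0 => /eqP.
apply: midpoint_zero x0; rewrite /g.
- move=> t s s0 st; rewrite -[f (t + s)](addrK (f (t - s))) f_midpoint //; ring.
- ring.
- ring.
- exact: continuous_within_subr_affine.
Qed.

End MidpointAffine.

Section SpectralTrace.
Local Open Scope complex_scope.
Local Open Scope sesquilinear_scope.
Variable R : realType.
Local Notation C := R[i].
Implicit Types (phi : R -> R).

Lemma mxtrace_unitary_conj_diag k (U : 'M[C]_k) (d : 'rV[C]_k) : U \is unitarymx ->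
  \tr (U *m diag_mx d *m U ^t*) = \sum_i d 0 i.
Proof.
move=> /unitarymxP U_unitary.
by rewrite mxtrace_mulC mulmxA (mulmx1C U_unitary) mul1mx mxtrace_diag.
Qed.

Lemma mxtrace_spectral_decomp k (X U : 'M[C]_k) mu : spectral_decomp X U mu ->
  \tr X = (\sum_i mu 0 i)%:C.
Proof.
case=> U_unitary ->; rewrite mxtrace_unitary_conj_diag // rmorph_sum.
by apply: eq_bigr => i _; rewrite mxE.
Qed.

Lemma mxtrace_sqr_spectral_decomp k (X U : 'M[C]_k) mu : spectral_decomp X U mu ->
  \tr (X *m X) = (\sum_i mu 0 i ^+ 2)%:C.
Proof.
case=> U_unitary ->; set D := diag_mx _.
have UtU := mulmx1C (unitarymxP U_unitary).
have -> : U *m D *m U ^t* *m (U *m D *m U ^t*) = U *m (D *m D) *m U ^t*.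
  by rewrite !mulmxA -[U *m D *m U ^t* *m U]mulmxA UtU mulmx1.
have -> : D *m D = diag_mx (map_mx (fun x => (x ^+ 2)%:C) mu).
  apply/matrixP => i j; rewrite mul_diag_mx !mxE.
  by case: (i == j); rewrite ?mulr1n ?mulr0n ?mulr0 // expr2 rmorphM.
rewrite mxtrace_unitary_conj_diag // rmorph_sum.
by apply: eq_bigr => i _; rewrite mxE.
Qed.

Lemma hermsymmx_spectral_decomp k (X : 'M[C]_k) : X \is hermsymmx ->
  exists p : 'M[C]_k * 'rV[R]_k, spectral_decomp X p.1 p.2.
Proof.
move=> X_herm.
have /mxOverP diag_real := hermitian_spectral_diag_real X_herm.
have /orthomx_spectralP X_spectral := hermitian_normalmx X_herm.
exists ((spectralmx X)^t*, map_mx (fun z : C => complex.Re z) (spectral_diag X)).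
split; first by rewrite trmxC_unitary spectral_unitarymx.
have -> : map_mx (fun x : R => x%:C)
    (map_mx (fun z : C => complex.Re z) (spectral_diag X)) = spectral_diag X.
  by apply/matrixP => i j; rewrite !mxE RRe_real.
by rewrite /= trmxCK -invmx_unitary ?spectral_unitarymx.
Qed.

Lemma trphi_hermsymmx k phi (X : 'M[C]_k) : X \is hermsymmx ->
  exists U mu, spectral_decomp X U mu /\ trphi phi X = \sum_i phi (mu 0 i).
Proof.
move=> /hermsymmx_spectral_decomp X_decomp.
rewrite /trphi /matfun; case: pselect => [e|//].
case: (cid e) => [[U mu] /= X_UD]; exists U, mu; split => //.
rewrite mxtrace_unitary_conj_diag; last by case: X_UD.
rewrite (eq_bigr (fun i => (phi (mu 0 i))%:C)) => [|i _]; last by rewrite mxE.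
by rewrite -rmorph_sum.
Qed.

Lemma spectral_decomp_psd_ge0 k (X U : 'M[C]_k) mu :
  spectral_decomp X U mu -> psdmx X -> forall i, 0 <= mu 0 i.
Proof.
case=> U_unitary X_UD X_psd i.
pose e : 'rV[C]_k := delta_mx 0 i.
have UtU := mulmx1C (unitarymxP U_unitary).
have := X_psd (e *m U ^t*).
rewrite trmx_mul map_mxM trmxCK X_UD; set D := diag_mx _.
have -> : e *m U ^t* *m (U *m D *m U ^t*) *m (U *m e ^t*) = e *m D *m e ^t*.
  rewrite !mulmxA -[e *m U ^t* *m U]mulmxA UtU mulmx1.
  by rewrite -[e *m D *m U ^t* *m U]mulmxA UtU mulmx1.
rewrite /D mul_mx_diag mxE (bigD1 i) //= big1 ?addr0.
  by rewrite !mxE !eqxx /= mulr1n mul1r conjC1 mulr1 ler0c.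
by move=> j ji; rewrite !mxE (negbTE ji) andbF !mul0r.
Qed.

End SpectralTrace.

Section PsdPrincipalSubmatrix.
Local Open Scope complex_scope.
Local Open Scope sesquilinear_scope.
Variable R : realType.
Local Notation C := R[i].

Lemma psdmx_mulmx_trmxC k m (M : 'M[C]_(k, m)) : psdmx (M *m M ^t*).
Proof.
move=> v; rewrite (_ : v *m _ *m _ = (v *m M) *m (v *m M) ^t*); last first.
  by rewrite trmx_mul map_mxM !mulmxA.
by rewrite mxE sumr_ge0 // => i _; rewrite !mxE mul_conjC_ge0.
Qed.

Lemma psdmxZ k (M : 'M[C]_k) r : 0 <= r -> psdmx M -> psdmx (r%:C *: M).
Proof. by move=> r0 M_psd v; rewrite -scalemxAr -scalemxAl mxE mulr_ge0 // ler0c. Qed.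

Lemma psdmxD k (M M' : 'M[C]_k) : psdmx M -> psdmx M' -> psdmx (M + M').
Proof. by move=> M_psd M'_psd v; rewrite mulmxDr mulmxDl mxE addr_ge0. Qed.

Definition selmx N (A : {set 'I_N}) : 'M[C]_(#|A|, N) :=
  \matrix_(i, j) (enum_val i == j)%:R.

Lemma principal_submxE N (L : 'M[C]_N) A :
  principal_submx L A = selmx A *m L *m (selmx A) ^t*.
Proof.
apply/matrixP => i j; rewrite !mxE (bigD1 (enum_val j)) //= big1 ?addr0.
  rewrite !mxE eqxx conjC1 mulr1 (bigD1 (enum_val i)) //= big1 ?addr0.
    by rewrite !mxE eqxx mul1r.
  by move=> l li; rewrite !mxE eq_sym (negbTE li) mul0r.
by move=> l lj; rewrite !mxE eq_sym (negbTE lj) conjC0 mulr0.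
Qed.

Lemma psdmx_principal_submx N (L : 'M[C]_N) A :
  psdmx L -> psdmx (principal_submx L A).
Proof.
move=> L_psd v; rewrite principal_submxE.
by have := L_psd (v *m selmx A); rewrite trmx_mul map_mxM !mulmxA.
Qed.

Lemma hermsymmx_principal_submx N (L : 'M[C]_N) A :
  L \is hermsymmx -> principal_submx L A \is hermsymmx.
Proof.
move=> /is_hermitianmxP; rewrite expr0 scale1r => L_herm.
apply/is_hermitianmxP; rewrite expr0 scale1r principal_submxE.
by rewrite !trmx_mul !map_mxM trmxCK -L_herm mulmxA.
Qed.

Lemma mxtrace_principal_submx N (L : 'M[C]_N) A :
  \tr (principal_submx L A) = \sum_(x in A) L x x.
Proof. by rewrite big_enum_val; apply: eq_bigr => i _; rewrite mxE. Qed.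

Lemma mxtrace_sqr_principal_submx N (L : 'M[C]_N) A :
  \tr (principal_submx L A *m principal_submx L A) =
  \sum_(x in A) \sum_(y in A) L x y * L y x.
Proof.
rewrite [RHS]big_enum_val; apply: eq_bigr => i _; rewrite mxE [RHS]big_enum_val.
by apply: eq_bigr => j _; rewrite !mxE.
Qed.

End PsdPrincipalSubmatrix.

Section SmallTrphi.
Local Open Scope complex_scope.
Variable R : realType.
Local Notation C := R[i].
Variable phi : R -> R.

Lemma trphi_size0 k (X : 'M[C]_k) : k = 0%N -> trphi phi X = 0.
Proof. by move=> k0; subst k; rewrite /trphi /mxtrace big_ord0. Qed.

Lemma trphi_size1 k (X : 'M[C]_k) : k = 1%N -> X \is hermsymmx ->
  trphi phi X = phi (complex.Re (\tr X)).
Proof.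
move=> k1; subst k => /(trphi_hermsymmx phi) [U [mu [X_UD ->]]].
by rewrite (mxtrace_spectral_decomp X_UD) !big_ord1.
Qed.

(* The eigenvalues of a 2 x 2 matrix are determined by [\tr X] and [\tr (X *m X)]. *)
Lemma trphi_size2 k (X : 'M[C]_k) (a b : R) : k = 2%N -> X \is hermsymmx ->
  \tr X = (a + b)%:C -> \tr (X *m X) = (a ^+ 2 + b ^+ 2)%:C ->
  trphi phi X = phi a + phi b.
Proof.
move=> k2; subst k => /(trphi_hermsymmx phi) [U [mu [X_UD ->]]].
rewrite (mxtrace_spectral_decomp X_UD) (mxtrace_sqr_spectral_decomp X_UD).
rewrite !big_ord_recr !big_ord0 /= !add0r => /complexI sum_ab /complexI sqr_ab.
set m0 := mu 0 _ in sum_ab sqr_ab *; set m1 := mu 0 _ in sum_ab sqr_ab *.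
have m1E : m1 = a + b - m0 by rewrite -sum_ab; ring.
have : (m0 - a) * (m0 - b) = 0.
  have : 2 * ((m0 - a) * (m0 - b)) = 0.
    by rewrite -(subrr (a ^+ 2 + b ^+ 2)) -{1}sqr_ab m1E; ring.
  by move/eqP; rewrite mulf_eq0 pnatr_eq0 => /eqP.
move/eqP; rewrite mulf_eq0 !subr_eq0 => /orP [] /eqP m0E; rewrite m1E m0E.
  by rewrite [a + b]addrC addrK.
by rewrite addrK addrC.
Qed.

End SmallTrphi.

Section LogModular.
Local Open Scope complex_scope.
Variable R : realType.
Local Notation C := R[i].
Variables (phi : R -> R) (N : nat) (L : 'M[C]_N).

Lemma modular_sum (F : 'I_N -> R) : modular (fun A : {set 'I_N} => \sum_(x in A) F x).
Proof.
move=> S T; rewrite (big_setID T) [in RHS](big_setID T) /=.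
rewrite [(S :|: T) :&: T]finset.setIC finset.setKU finset.setDUl finset.setDv.
by rewrite finset.setU0; ring.
Qed.

Lemma Re_sum (F : 'I_N -> C) (P : pred 'I_N) :
  complex.Re (\sum_(i | P i) F i) = \sum_(i | P i) complex.Re (F i).
Proof. exact: (@raddf_sum _ _ (@complex.Re R : Rcomplex R -> R)). Qed.

Lemma dkpp_Z_gt0 : 0 < dkpp_Z phi L.
Proof.
rewrite /dkpp_Z (bigD1 finset.set0) //= ltr_pwDl ?expR_gt0 //.
by rewrite sumr_ge0 // => A _; rewrite ltW ?expR_gt0.
Qed.

Lemma ln_dkpp A :
  ln (dkpp phi L A) = trphi phi (principal_submx L A) - ln (dkpp_Z phi L).
Proof. by rewrite /dkpp ln_div ?posrE ?expR_gt0 ?dkpp_Z_gt0 // expRK. Qed.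

Lemma log_modular_dkppP :
  log_modular (dkpp phi L) <-> modular (fun A => trphi phi (principal_submx L A)).
Proof.
split=> [[_ dkpp_modular] S T | trphi_modular].
  by have := dkpp_modular S T; rewrite /= !ln_dkpp => ?; lra.
split=> [A | S T /=]; first by rewrite divr_gt0 ?expR_gt0 ?dkpp_Z_gt0.
by rewrite !ln_dkpp; have := trphi_modular S T; lra.
Qed.

Lemma trphi_affine k (X : 'M[C]_k) (b c : R) :
  (forall x, 0 <= x -> phi x = b * x + c) -> X \is hermsymmx -> psdmx X ->
  trphi phi X = b * complex.Re (\tr X) + k%:R * c.
Proof.
move=> phiE /(trphi_hermsymmx phi) [U [mu [X_UD ->]]] X_psd.
have -> : k%:R * c = \sum_(i < k) c by rewrite sumr_const card_ord mulr_natl.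
rewrite (mxtrace_spectral_decomp X_UD) /= mulr_sumr -big_split.
by apply: eq_bigr => i _; rewrite phiE // (spectral_decomp_psd_ge0 X_UD).
Qed.

Lemma modular_trphi_affine (b c : R) :
  (forall x, 0 <= x -> phi x = b * x + c) -> L \is hermsymmx -> psdmx L ->
  modular (fun A => trphi phi (principal_submx L A)).
Proof.
move=> phiE L_herm L_psd S T.
rewrite !(trphi_affine phiE (hermsymmx_principal_submx _ L_herm)
  (@psdmx_principal_submx _ _ L _ L_psd)).
rewrite !mxtrace_principal_submx !Re_sum.
have := modular_sum (fun x => complex.Re (L x x)) S T.
have : #|S|%:R + #|T|%:R = #|S :|: T|%:R + #|S :&: T|%:R :> R.
  by rewrite -!natrD cardsUI.
move=> card_modular sum_modular; nra.
Qed.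

End LogModular.

Section PairTestMatrix.
Local Open Scope complex_scope.
Local Open Scope sesquilinear_scope.
Variable R : realType.
Local Notation C := R[i].
Variables (N : nat) (i0 i1 : 'I_N).

Lemma conjC_real (x : R) : (x%:C)^*%R = x%:C :> C.
Proof. exact: conjc_real. Qed.

Definition pair_testmx (t s : R) : 'M[C]_N :=
  let v := \col_i ((i == i0) || (i == i1))%:R in
  (t - s)%:C *: 1%:M + s%:C *: (v *m v ^t*).

Lemma pair_testmxE t s i j : i \in [set i0; i1]%SET -> j \in [set i0; i1]%SET ->
  pair_testmx t s i j = (if i == j then t else s)%:C.
Proof.
rewrite !inE => /orP i01 /orP j01.
rewrite /pair_testmx !mxE big_ord1 !mxE.
have -> : (i == i0) || (i == i1) by case: i01 => ->; rewrite ?orbT.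
have -> : (j == i0) || (j == i1) by case: j01 => ->; rewrite ?orbT.
rewrite conjC1 !mulr1; case: (i == j); last by rewrite mulr0 add0r.
by rewrite mulr1 -rmorphD subrK.
Qed.

Lemma hermsymmx_pair_testmx t s : pair_testmx t s \is hermsymmx.
Proof.
apply/is_hermitianmxP; rewrite expr0 scale1r; apply/matrixP => i j.
rewrite !mxE !big_ord1 !mxE !conjC_nat [RHS]rmorphD !rmorphM /= !conjC_nat !conjC_real.
by rewrite eq_sym (mulrC ((j == i0) || _)%:R).
Qed.

Lemma psdmx_pair_testmx t s : 0 <= s -> s <= t -> psdmx (pair_testmx t s).
Proof.
move=> s0 st; apply: psdmxD; apply: psdmxZ; rewrite ?subr_ge0 //;
  last exact: psdmx_mulmx_trmxC.
have -> : 1%:M = 1%:M *m (1%:M : 'M[C]_N) ^t* by rewrite trmx1 map_mx1 mulmx1.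
exact: psdmx_mulmx_trmxC.
Qed.

Lemma pair_testmx_midpoint (phi : R -> R) t s : i0 != i1 ->
  modular (fun A => trphi phi (principal_submx (pair_testmx t s) A)) ->
  phi (t + s) + phi (t - s) = 2 * phi t.
Proof.
move=> i01 /(_ [set i0]%SET [set i1]%SET) /=.
set L := pair_testmx t s.
have L_herm A := hermsymmx_principal_submx A (hermsymmx_pair_testmx t s).
have i0_in : i0 \in [set i0; i1]%SET by rewrite !inE eqxx.
have i1_in : i1 \in [set i0; i1]%SET by rewrite !inE eqxx orbT.
have L00 : L i0 i0 = t%:C by rewrite pair_testmxE ?eqxx.
have L11 : L i1 i1 = t%:C by rewrite pair_testmxE ?eqxx.
have L01 : L i0 i1 = s%:C by rewrite pair_testmxE ?(negbTE i01).
have L10 : L i1 i0 = s%:C by rewrite pair_testmxE // eq_sym (negbTE i01).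
have i0_notin : i0 \notin [set i1]%SET by rewrite inE.
rewrite (@trphi_size0 _ _ _ (principal_submx L ([set i0] :&: [set i1])%SET));
  last by apply/eqP; rewrite cards_eq0 finset.setI_eq0 disjoints1.
rewrite (@trphi_size2 _ _ _ (principal_submx L [set i0; i1]%SET) (t + s) (t - s));
  rewrite ?cards2 ?i01 //; first last.
- rewrite mxtrace_sqr_principal_submx big_setU1 //= big_set1 !big_setU1 //= !big_set1.
  by rewrite L00 L11 L01 L10 -!rmorphM -!rmorphD; congr (_%:C); ring.
- rewrite mxtrace_principal_submx big_setU1 //= big_set1 L00 L11 -rmorphD.
  by congr (_%:C); ring.
rewrite !(@trphi_size1 _ _ _ (principal_submx L _)) ?cards1 //.
rewrite !mxtrace_principal_submx !big_set1 L00 L11 /=.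
by move=> ?; lra.
Qed.

End PairTestMatrix.

Theorem mainTheorem4 (R : realType) (N : nat) (hN : (2 <= N)%N) (phi : R -> R)
  (hphi : {within [set x : R | 0 <= x], continuous phi}) :
  (forall L : 'M[R[i]]_N, L \is hermsymmx -> psdmx L -> log_modular (dkpp phi L))
  <-> exists b c : R, forall x : R, 0 <= x -> phi x = b * x + c.
Proof.
split=> [dkpp_log_modular | [b [c phiE]] L L_herm L_psd]; last first.
  exact/log_modular_dkppP/(modular_trphi_affine phiE).
apply: midpoint_affine hphi _ => t s s0 st.
pose i0 : 'I_N := Ordinal (ltnW hN); pose i1 : 'I_N := Ordinal hN.
apply: (@pair_testmx_midpoint _ _ i0 i1) => //.
apply/log_modular_dkppP/dkpp_log_modular.
  exact: hermsymmx_pair_testmx.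
exact: psdmx_pair_testmx.
Qed.
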